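(* Let $L$ be a finite lattice and $\varphi\in R(L)$ with $\varphi(\hat0)\ge 0$. Then the Möbius inverse $f$ of $\varphi$ is nonnegative on $L$ if and only if $\varphi$ is completely monotone.
   Context: $L$ is a finite lattice with order $\le$, meet $\wedge$, minimum $\hat0$; $R(L)$ is the space of real-valued functions on $L$. The Möbius inverse of $\varphi$ is the unique $f\in R(L)$ with $\varphi(x)=\sum_{y\le x}f(y)$ for all $x\in L$. For $a\in L$, $\nabla_a\varphi(x)=\varphi(x)-\varphi(x\wedge a)$, and $\nabla_{a_1,\ldots,a_n}\varphi=\nabla_{a_n}(\nabla_{a_1,\ldots,a_{n-1}}\varphi)$ for $n\ge2$. The function $\varphi$ is completely monotone if $\nabla_{a_1,\ldots,a_n}\varphi(x)\ge0$ for all $x,a_1,\dots,a_n\in L$ and all $n\ge1$. *)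

From HB Require Import structures.
From mathcomp Require Import all_boot all_order all_algebra.
From mathcomp Require Import Rstruct.
Set Implicit Arguments. Unset Strict Implicit. Unset Printing Implicit Defensive.
Import Order.TTheory GRing.Theory Num.Theory.
Local Open Scope order_scope.
Local Open Scope ring_scope.

Notation RR := Rdefinitions.R.

(* A finite lattice L is a finTBLatticeType (finite, nonempty, so it has
   \bot = \hat0 and \top).  Functions in R(L) are L -> RR. *)

Section Defs.
Context {disp : Order.disp_t} {L : finTBLatticeType disp}.

Definition mobius_inverse (phi f : L -> RR) : Prop :=
  forall x : L, phi x = \sum_(y : L | (y <= x)%O) f y.

Definition nabla (a : L) (phi : L -> RR) : L -> RR :=
  fun x => phi x - phi (x `&` a)%O.

Definition nablas (s : seq L) (phi : L -> RR) : L -> RR :=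
  foldl (fun psi a => nabla a psi) phi s.

Definition completely_monotone (phi : L -> RR) : Prop :=
  forall (s : seq L) (x : L), (0 < size s)%N -> 0 <= nablas s phi x.
End Defs.

From HB Require Import structures.
From mathcomp Require Import all_boot all_order all_algebra.
From mathcomp Require Import Rstruct.
Import Order.TTheory GRing.Theory Num.Theory.
Local Open Scope ring_scope.

(* Each difference [nabla_a] removes from the Möbius expansion of [phi x] the
   terms [f y] with [y <= a], so [nabla_{a_1..a_n} phi x] is the sum of [f] over
   [{y <= x | y <= a_i for no i}].  Hence [f >= 0] gives complete monotonicity;
   conversely, taking for the [a_i] all elements not above [x] isolates [f x],
   and when that list is empty [x] is the bottom, where [phi >= 0] is assumed. *)

Section MobiusDifferences.
Context {disp : Order.disp_t} {L : finTBLatticeType disp}.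
Variables phi f : L -> RR.
Hypothesis phi_f : mobius_inverse phi f.

Lemma nablas_mobius (s : seq L) (x : L) :
  nablas s phi x =
  \sum_(y : L | (y <= x)%O && all (fun a => ~~ (y <= a)%O) s) f y.
Proof.
elim/last_ind: s x => [|s a IHs] x.
  by rewrite /nablas /= phi_f; apply: eq_bigl => y; rewrite andbT.
rewrite /nablas foldl_rcons -/(nablas s phi) /nabla !IHs.
rewrite (bigID (fun y => (y <= a)%O)) /=.
under [X in X + _ - _ = _]eq_bigl => y do rewrite andbAC -lexI.
rewrite addrAC subrr add0r; apply: eq_bigl => y.
by rewrite all_rcons -andbA [~~ _ && _]andbC.
Qed.

Definition not_above (x : L) : seq L := [seq a <- enum L | ~~ (x <= a)%O].

Lemma mem_not_above (x a : L) : (a \in not_above x) = ~~ (x <= a)%O.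
Proof. by rewrite mem_filter mem_enum andbT. Qed.

Lemma nablas_not_above (x : L) : nablas (not_above x) phi x = f x.
Proof.
rewrite nablas_mobius; apply: big_pred1 => y /=.
apply/andP/eqP => [[le_yx /allP y_not_below] | ->]; last first.
  by split=> //; apply/allP => a; rewrite mem_not_above.
apply/eqP; rewrite eq_le le_yx /=; apply/negPn/negP => not_le_xy.
by move: (y_not_below y); rewrite mem_not_above lexx; move/(_ not_le_xy).
Qed.

Lemma not_above_nil {x : L} : not_above x = [::] -> x = \bot%O.
Proof.
move=> nil_x; apply/eqP; rewrite eq_le le0x andbT.
by apply/negPn/negP; rewrite -mem_not_above nil_x.
Qed.

End MobiusDifferences.

Theorem corollary2p5 (disp : Order.disp_t) (L : finTBLatticeType disp)
  (phi f : L -> RR) :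
  0 <= phi (\bot%O) ->
  mobius_inverse phi f ->
  ((forall x : L, 0 <= f x) <-> completely_monotone phi).
Proof.
move=> phi_bot_ge0 phi_f; split.
  by move=> f_ge0 s x _; rewrite (nablas_mobius _ _ phi_f); apply: sumr_ge0.
move=> phi_cm x; rewrite -(nablas_not_above _ _ phi_f).
have [/eqP|] := posnP (size (not_above x)); last exact: phi_cm.
rewrite size_eq0 => /eqP nil_x.
rewrite nil_x (not_above_nil nil_x); exact: phi_bot_ge0.
Qed.
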